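(* Let $n\ge 1$. Every probability distribution $p$ on $\{0,1\}^n$ can be approximated arbitrarily well by the visible marginal distribution of an RBM with $n$ visible units and $\frac{2^n}{2}-1$ hidden units; that is, for every $\varepsilon>0$ there exist parameters $W,B,C$ of such an RBM whose visible marginal $q$ satisfies $D(p\,\|\,q)<\varepsilon$.
   Context: A Restricted Boltzmann Machine (RBM) with $n$ visible units and $m$ hidden units has parameters $W\in\mathbb{R}^{m\times n}$, $B\in\mathbb{R}^n$, $C\in\mathbb{R}^m$, and defines the joint distribution $p(v,h)=\frac{1}{Z}\exp(h^T W v + B\cdot v + C\cdot h)$ on $(v,h)\in\{0,1\}^n\times\{0,1\}^m$, where $Z$ is the normalizing constant; its visible marginal distribution is $q(v)=\sum_{h\in\{0,1\}^m}p(v,h)$. $D(p\|q)=\sum_v p(v)\log\frac{p(v)}{q(v)}$ denotes the Kullback–Leibler divergence. *)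

From mathcomp Require Import all_boot all_order all_algebra.
From mathcomp Require Import all_classical all_reals all_analysis.
Set Implicit Arguments. Unset Strict Implicit. Unset Printing Implicit Defensive.
Import Order.TTheory GRing.Theory Num.Theory.
Local Open Scope ring_scope.

Notation bvec k := {ffun 'I_k -> bool}.

Section RBM.
Variable R : realType.

Definition bitR (b : bool) : R := (b : nat)%:R.

Definition rbm_weight (n m : nat) (W : 'M[R]_(m, n)) (B : 'rV[R]_n) (C : 'rV[R]_m)
    (v : bvec n) (h : bvec m) : R :=
  expR ((\sum_(i < m) \sum_(j < n) bitR (h i) * W i j * bitR (v j))
        + (\sum_(j < n) B 0 j * bitR (v j))
        + (\sum_(i < m) C 0 i * bitR (h i))).

Definition rbm_Z (n m : nat) W B C : R :=
  \sum_(v : bvec n) \sum_(h : bvec m) @rbm_weight n m W B C v h.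

Definition rbm_joint (n m : nat) W B C (v : bvec n) (h : bvec m) : R :=
  @rbm_weight n m W B C v h / rbm_Z W B C.

Definition rbm_marginal (n m : nat) W B C (v : bvec n) : R :=
  \sum_(h : bvec m) @rbm_joint n m W B C v h.

Definition is_distr (T : finType) (p : T -> R) : Prop :=
  (forall x, 0 <= p x) /\ \sum_(x : T) p x = 1.

(* Kullback-Leibler divergence, with the convention 0 log (0/q) = 0 *)
Definition KL (T : finType) (p q : T -> R) : R :=
  \sum_(x : T | p x != 0) p x * ln (p x / q x).

End RBM.

From mathcomp Require Import all_boot all_order all_algebra.
From mathcomp Require Import all_classical all_reals all_analysis.
From mathcomp Require Import ring lra.
Import Order.TTheory GRing.Theory Num.Theory.
Set Implicit Arguments. Unset Strict Implicit.
Local Open Scope ring_scope.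

(* Split a state as [v = (v_0, t)] with tail [t] in [{0,1}^(n-1)].  Each of the
   [2^(n-1) - 1] nonzero tails gets one hidden unit whose large weights keep it
   essentially off unless the tail of [v] is exactly that tail; then its factor
   [1 + exp (a + gam v_0)] in the unnormalized visible weight can be tuned, for
   both values of [v_0], to hit any positive target.  The zero tail is handled
   by the visible bias alone, and the almost-off units cost at most a factor
   [(1 + e)^m].  With the target [p + eta] this gives
   [p <= (1 + e)^m (1 + 2^n eta) q], hence [D(p||q) <= m e + 2^n eta]. *)

Section RBMApproximation.
Variable R : realType.

Lemma KL_le_ln (T : finType) (p q : T -> R) (K : R) :
  is_distr p -> (forall x, 0 < q x) -> 0 < K -> (forall x, p x <= K * q x) ->
  KL p q <= ln K.
Proof.
move=> [p_ge0 p_sum1] q_gt0 K_gt0 p_le.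
have supp_sum1 : \sum_(x | p x != 0) p x = 1.
  rewrite -p_sum1 [RHS](bigID (fun x => p x != 0)) /= [X in _ = _ + X]big1 ?addr0 //.
  by move=> x /negbNE/eqP.
apply: (@le_trans _ _ (\sum_(x | p x != 0) p x * ln K)); last first.
  by rewrite -mulr_suml supp_sum1 mul1r.
apply: ler_sum => x px; apply: ler_wpM2l => //.
have px_gt0 : 0 < p x by rewrite lt_neqAle eq_sym px p_ge0.
by rewrite ler_ln ?posrE ?divr_gt0 // ler_pdivrMr.
Qed.

Lemma KL_normalized_le (T : finType) (p G F : T -> R) (c d : R) :
  is_distr p -> (forall x, p x <= G x) -> (forall x, 0 < G x) -> 0 < c ->
  (forall x, c * G x <= F x <= d * (c * G x)) ->
  KL p (fun x => F x / \sum_y F y) <= ln (d * \sum_y G y).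
Proof.
move=> p_distr pG G_gt0 c_gt0 FG.
have F_gt0 x : 0 < F x.
  by apply: lt_le_trans (andP (FG x)).1; rewrite mulr_gt0.
have [x0 _ | T0] := pickP (@predT T); last first.
  by rewrite /KL !big_pred0 ?mulr0 ?ln0 // => x; have := T0 x.
have d_gt0 : 0 < d.
  have /andP[lo hi] := FG x0; have cG := mulr_gt0 c_gt0 (G_gt0 x0).
  by rewrite -(pmulr_lgt0 _ cG); apply: lt_le_trans (le_trans lo hi).
have SF_gt0 : 0 < \sum_y F y.
  by rewrite (bigD1 x0) //= ltr_pwDl // sumr_ge0 // => y _; apply: ltW.
have SF_le : \sum_y F y <= d * (c * \sum_y G y).
  rewrite !mulr_sumr; apply: ler_sum => y _; exact: (andP (FG y)).2.
have SG_gt0 : 0 < \sum_y G y.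
  by rewrite (bigD1 x0) //= ltr_pwDl // sumr_ge0 // => y _; apply: ltW.
apply: KL_le_ln => [//|x||x]; first by rewrite divr_gt0.
  by rewrite mulr_gt0.
rewrite mulrA ler_pdivlMr //.
apply: (@le_trans _ _ (p x * (d * (c * \sum_y G y)))).
  by rewrite ler_wpM2l ?p_distr.1.
rewrite [X in X <= _](_ : _ = (d * \sum_y G y) * (c * p x)); last by ring.
rewrite ler_pM2l ?mulr_gt0 //; apply: le_trans (andP (FG x)).1.
by rewrite ler_pM2l.
Qed.

Lemma prod1D_sandwich (I : finType) (x : I -> R) (P : pred I) (e : R) :
  (forall i, 0 <= x i) -> (forall i, ~~ P i -> x i <= e) -> 0 <= e ->
  \prod_i (1 + (P i)%:R * x i) <= \prod_i (1 + x i)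
    <= (1 + e) ^+ #|I| * \prod_i (1 + (P i)%:R * x i).
Proof.
move=> x_ge0 x_le e_ge0; apply/andP; split.
  apply: ler_prod => i _; have := x_ge0 i.
  by case: (P i) => /= xi_ge0; apply/andP; split; lra.
rewrite -prodr_const -big_split /=; apply: ler_prod => i _; have := x_ge0 i.
case Pi: (P i) => /= xi_ge0; apply/andP; split; try lra; first nra.
by have := x_le i; rewrite Pi => /(_ isT); lra.
Qed.

Definition softplus_inv (x : R) : R := ln (expR x - 1).

Lemma softplus_invK (x : R) : 0 < x -> 1 + expR (softplus_inv x) = expR x.
Proof.
by move=> x_gt0; rewrite /softplus_inv lnK ?posrE ?subr_gt0 ?expR_gt1 //; ring.
Qed.

Lemma bitR0 : bitR R false = 0. Proof. by []. Qed.
Lemma bitR1 : bitR R true = 1. Proof. by []. Qed.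
Lemma bitR_ge0 (b : bool) : 0 <= bitR R b. Proof. by case: b. Qed.

Lemma sum_bitR_ge1 (I : finType) (f : I -> bool) (j : I) : f j -> 1 <= \sum_i bitR R (f i).
Proof.
move=> fj; rewrite (bigD1 j) //= fj bitR1 lerDl.
by apply: sumr_ge0 => i _; apply: bitR_ge0.
Qed.

Definition hidden_input n m (W : 'M[R]_(m, n)) (C : 'rV[R]_m) (v : bvec n) (i : 'I_m) : R :=
  \sum_(j < n) W i j * bitR R (v j) + C 0 i.

Definition visible_input n (B : 'rV[R]_n) (v : bvec n) : R :=
  \sum_(j < n) B 0 j * bitR R (v j).

Definition vweight n m (W : 'M[R]_(m, n)) B C (v : bvec n) : R :=
  \sum_(h : bvec m) rbm_weight W B C v h.

Lemma vweightE n m (W : 'M[R]_(m, n)) B C (v : bvec n) :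
  vweight W B C v = expR (visible_input B v) * \prod_(i < m) (1 + expR (hidden_input W C v i)).
Proof.
have weightE h : rbm_weight W B C v h =
    expR (visible_input B v) * \prod_(i < m) expR (bitR R (h i) * hidden_input W C v i).
  rewrite /rbm_weight -expR_sum -expRD; congr expR.
  rewrite addrAC addrC; congr (_ + _).
  rewrite -big_split /=; apply: eq_bigr => i _.
  rewrite /hidden_input mulrDr mulr_sumr; congr (_ + _); last by rewrite mulrC.
  by apply: eq_bigr => j _; rewrite mulrA.
rewrite /vweight; under eq_bigr do rewrite weightE.
rewrite -mulr_sumr -(bigA_distr_bigA (fun i b => expR (bitR R b * hidden_input W C v i))).
by congr (_ * _); apply: eq_bigr => i _; rewrite big_bool /= mul0r mul1r expR0 addrC.
Qed.

Lemma rbm_marginalE n m (W : 'M[R]_(m, n)) B C :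
  rbm_marginal W B C = fun v => vweight W B C v / \sum_u vweight W B C u.
Proof. by apply: funext => v; rewrite /rbm_marginal /rbm_joint -mulr_suml. Qed.

Section Tails.
Variable k : nat.
Implicit Types (v w : bvec k.+1).

Definition bzero : bvec k.+1 := [ffun _ => false].
Definition clear0 v : bvec k.+1 := [ffun j => if j == ord0 then false else v j].
Definition raise0 w : bvec k.+1 := [ffun j => if j == ord0 then true else w j].
Definition nonzero_tails : {set bvec k.+1} := [set w : bvec k.+1 | ~~ w ord0 & w != bzero].
Definition popcount w : R := \sum_j bitR R (w j).
Definition tail_dist v w : R := \sum_j bitR R (clear0 v j != w j).

Lemma clear0_split v : v = if v ord0 then raise0 (clear0 v) else clear0 v.
Proof.
by apply/ffunP => j; case: ifP => v0; rewrite !ffunE; case: eqP => // ->; rewrite v0.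
Qed.

Lemma clear0_tail_or_zero v : clear0 v \in nonzero_tails \/ clear0 v = bzero.
Proof.
have [-> | nz] := eqVneq (clear0 v) bzero; [by right | left].
by rewrite inE ffunE eqxx nz.
Qed.

Lemma bzero_notin_tails : bzero \notin nonzero_tails.
Proof. by rewrite inE eqxx andbF. Qed.

Lemma popcount_bzero : popcount bzero = 0.
Proof. by rewrite /popcount big1 // => j _; rewrite ffunE. Qed.

Lemma popcount_ge1 w : w \in nonzero_tails -> 1 <= popcount w.
Proof.
rewrite inE => /andP[_ nz]; have [j wj] : exists j, w j.
  apply/existsP; apply: contraR nz => /existsPn w0; apply/eqP/ffunP => j.
  by have := w0 j; rewrite ffunE => /negbTE.
exact: (sum_bitR_ge1 wj).
Qed.

Lemma tail_dist_clear0 v : tail_dist v (clear0 v) = 0.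
Proof. by rewrite /tail_dist big1 // => j _; rewrite eqxx. Qed.

Lemma tail_dist_ge1 v w : clear0 v != w -> 1 <= tail_dist v w.
Proof.
move=> ne; have [j nej] : exists j, clear0 v j != w j.
  apply/existsP; apply: contraR ne => /existsPn eq_vw; apply/eqP/ffunP => j.
  by have := eq_vw j; rewrite negbK => /eqP.
exact: (sum_bitR_ge1 (f := fun j => clear0 v j != w j) nej).
Qed.

(* With these parameters hidden unit [i] receives [a i + gam i * v_0] minus
   [K i] for every tail bit of [v] that disagrees with [g i]. *)
Definition gadgetW m (g : 'I_m -> bvec k.+1) (gam K : 'I_m -> R) : 'M[R]_(m, k.+1) :=
  \matrix_(i, j) (if j == ord0 then gam i else if g i j then K i else - K i).
Definition gadgetC m (g : 'I_m -> bvec k.+1) (a K : 'I_m -> R) : 'rV[R]_m :=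
  \row_i (a i - K i * popcount (g i)).
Definition gadgetB (beta L : R) : 'rV[R]_k.+1 :=
  \row_j (if j == ord0 then beta else - L).

Lemma sum_ord0 (f : 'I_k.+1 -> R) : \sum_j (if j == ord0 then f j else 0) = f ord0.
Proof. by rewrite -big_mkcond /= big_pred1_eq. Qed.

Lemma hidden_input_gadget m (g : 'I_m -> bvec k.+1) (gam K a : 'I_m -> R) v i :
  ~~ g i ord0 ->
  hidden_input (gadgetW g gam K) (gadgetC g a K) v i
    = a i + gam i * bitR R (v ord0) - K i * tail_dist v (g i).
Proof.
move=> /negbTE gi0; rewrite /hidden_input mxE /popcount /tail_dist.
have -> : \sum_j gadgetW g gam K i j * bitR R (v j) =
    \sum_j ((if j == ord0 then gam i * bitR R (v j) else 0)
            + (K i * bitR R (g i j) - K i * bitR R (clear0 v j != g i j))).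
  apply: eq_bigr => j _; rewrite mxE ffunE; case: eqP => [->|_].
    by rewrite gi0 /=; ring.
  by case: (v j); case: (g i j); rewrite /= ?bitR0 ?bitR1; ring.
by rewrite big_split /= sum_ord0 big_split /= sumrN -!big_distrr /=; ring.
Qed.

Lemma visible_input_gadget beta L v :
  visible_input (gadgetB beta L) v = beta * bitR R (v ord0) - L * popcount (clear0 v).
Proof.
rewrite /visible_input /popcount.
have -> : \sum_j gadgetB beta L 0 j * bitR R (v j) =
    \sum_j ((if j == ord0 then beta * bitR R (v j) else 0) - L * bitR R (clear0 v j)).
  by apply: eq_bigr => j _; rewrite !mxE ffunE; case: eqP => [->|_]; rewrite ?bitR0; ring.
by rewrite big_split /= sum_ord0 sumrN -big_distrr.
Qed.

End Tails.

Section Construction.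
Variables (k m : nat) (g : 'I_m -> bvec k.+1).
Hypotheses (g_inj : injective g) (g_tail : forall i, g i \in nonzero_tails k)
  (g_onto : forall w, w \in nonzero_tails k -> exists i, g i = w).
Variables (phi : bvec k.+1 -> R) (e : R).
Hypotheses (phi_bzero : phi (bzero k) = 0) (e_gt0 : 0 < e).

(* The visible bias [-L] on the tail coordinates makes every nonzero tail
   start from an unnormalized weight below the target; the hidden unit tuned
   to that tail then adds exactly the missing mass, for either value of the
   first visible unit ([s0] and [s1] are the required log-increments). *)
Let beta := phi (raise0 (bzero k)).
Let L := 1 + `|beta| + \sum_v `|phi v|.
Let s0 w := phi w + L * popcount w.
Let s1 w := phi (raise0 w) + L * popcount w - beta.
Let a i := softplus_inv (s0 (g i)).
Let gam i := softplus_inv (s1 (g i)) - a i.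
Let K i := `|a i| + `|gam i| + `|ln e|.
Let W := gadgetW g gam K.
Let B := gadgetB k beta L.
Let C := gadgetC g a K.

Lemma increments_gt0 w : w \in nonzero_tails k -> 0 < s0 w /\ 0 < s1 w.
Proof.
move=> w_tail; have phi_le u : `|phi u| <= \sum_v `|phi v|.
  by rewrite (bigD1 u) //= lerDl sumr_ge0.
have L_le : L <= L * popcount w.
  by rewrite ler_peMr ?popcount_ge1 // /L addr_ge0 ?sumr_ge0.
have := phi_le w; have := phi_le (raise0 w); have := ler_norm beta; have := normr_ge0 beta.
have := lerNnormlW (lexx `|phi w|); have := lerNnormlW (lexx `|phi (raise0 w)|).
rewrite /s0 /s1 /L in L_le *; split; lra.
Qed.

Lemma matched_hidden_input v i : g i = clear0 v ->
  hidden_input W C v i = softplus_inv (if v ord0 then s1 (g i) else s0 (g i)).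
Proof.
move=> gi_v; have /andP[gi0 _] : ~~ g i ord0 && (g i != bzero k).
  by have := g_tail i; rewrite inE.
rewrite hidden_input_gadget // gi_v tail_dist_clear0 -gi_v mulr0 subr0 /gam.
by case: (v ord0); rewrite ?bitR0 ?bitR1 ?mulr0 ?addr0 // mulr1 addrC subrK.
Qed.

Lemma mismatched_hidden_input_le v i : g i != clear0 v -> expR (hidden_input W C v i) <= e.
Proof.
move=> ne; have /andP[gi0 _] : ~~ g i ord0 && (g i != bzero k).
  by have := g_tail i; rewrite inE.
rewrite hidden_input_gadget // -[X in _ <= X]lnK ?posrE // ler_expR.
have K_le : K i <= K i * tail_dist v (g i).
  by rewrite ler_peMr ?tail_dist_ge1 1?eq_sym // /K !addr_ge0.
have := lerNnormlW (lexx `|ln e|); have := ler_norm (a i); have := ler_norm (gam i).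
have := normr_ge0 (gam i); rewrite /K in K_le *.
by case: (v ord0); rewrite ?bitR0 ?bitR1; lra.
Qed.

Lemma matched_vweight v :
  expR (visible_input B v) * \prod_i (1 + (g i == clear0 v)%:R * expR (hidden_input W C v i))
    = expR (phi v).
Proof.
rewrite visible_input_gadget; have v_split := clear0_split v.
case: (clear0_tail_or_zero v) => [w_tail | v_low]; last first.
  rewrite big1 => [|i _]; last first.
    have -> : (g i == clear0 v) = false.
      by apply: contraNF (bzero_notin_tails k) => /eqP gi_v; rewrite -v_low -gi_v.
    by rewrite mul0r addr0.
  rewrite mulr1 v_low popcount_bzero mulr0 subr0.
  by move: v_split; rewrite v_low; case: (v ord0) => ->; rewrite ?mulr1 ?mulr0 ?phi_bzero.
have [i0 gi0] := g_onto w_tail.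
rewrite (bigD1 i0) //= big1 => [|i ne]; last first.
  have -> : (g i == clear0 v) = false by rewrite -gi0 (inj_eq g_inj) (negbTE ne).
  by rewrite mul0r addr0.
have [s0_gt0 s1_gt0] := increments_gt0 w_tail.
rewrite gi0 eqxx mul1r mulr1 matched_hidden_input // gi0.
case: (v ord0) v_split => /= v_eq; rewrite softplus_invK // -expRD [in RHS]v_eq;
  congr expR; rewrite ?bitR0 ?bitR1 /s0 /s1; ring.
Qed.

Lemma gadget_vweight_sandwich :
  exists (W : 'M[R]_(m, k.+1)) (B : 'rV[R]_k.+1) (C : 'rV[R]_m),
    forall v, expR (phi v) <= vweight W B C v <= (1 + e) ^+ m * expR (phi v).
Proof.
exists W, B, C => v.
have := prod1D_sandwich (fun i => expR_ge0 (hidden_input W C v i))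
  (@mismatched_hidden_input_le v) (ltW e_gt0).
rewrite card_ord vweightE -(matched_vweight v) => /andP[lo hi].
by rewrite ler_wpM2l ?expR_ge0 //= mulrCA ler_wpM2l ?expR_ge0.
Qed.

End Construction.

Definition flip0 k (w : bvec k.+1) : bvec k.+1 :=
  [ffun j => if j == ord0 then ~~ w j else w j].

Lemma flip0K k : involutive (@flip0 k).
Proof. by move=> w; apply/ffunP => j; rewrite !ffunE; case: eqP => // _; rewrite negbK. Qed.

(* [flip0] swaps the two halves of the cube, so each has [2 ^ k] elements. *)
Lemma card_nonzero_tails k : #|nonzero_tails k| = (2 ^ k.+1 %/ 2 - 1)%N.
Proof.
pose A : {set bvec k.+1} := [set w : bvec k.+1 | ~~ w ord0].
have flipA : ~: A = @flip0 k @: A.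
  rewrite (can2_imset_pre _ (@flip0K k) (@flip0K k)); apply/setP => w.
  by rewrite !inE ffunE eqxx negbK.
have cardA2 := cardsC A.
rewrite flipA card_imset ?card_ffun ?card_bool ?card_ord in cardA2; last first.
  exact: can_inj (@flip0K k).
have -> : #|nonzero_tails k| = (#|A| - 1)%N.
  rewrite (cardsD1 (bzero k) A) inE ffunE /= addnC addnK.
  by apply: eq_card => w; rewrite !inE andbC.
by rewrite -cardA2 addnn -muln2 mulnK.
Qed.

Lemma rbm_vweight_approx k (phi : bvec k.+1 -> R) (e : R) :
  phi (bzero k) = 0 -> 0 < e ->
  exists (W : 'M[R]_(2 ^ k.+1 %/ 2 - 1, k.+1)) (B : 'rV[R]_k.+1) C,
    forall v, expR (phi v) <= vweight W B C v
                <= (1 + e) ^+ (2 ^ k.+1 %/ 2 - 1) * expR (phi v).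
Proof.
pose g i := enum_val (cast_ord (esym (card_nonzero_tails k)) i).
apply: (@gadget_vweight_sandwich k _ g).
- by move=> i j /enum_val_inj /cast_ord_inj.
- by move=> i; apply: enum_valP.
- move=> w w_tail; exists (cast_ord (card_nonzero_tails k) (enum_rank_in w_tail w)).
  by rewrite /g cast_ordK enum_rankK_in.
Qed.

Lemma ln_expr1D_mul_le (e x : R) (m : nat) :
  0 <= e -> 0 <= x -> ln ((1 + e) ^+ m * (1 + x)) <= m%:R * e + x.
Proof.
move=> e_ge0 x_ge0; have e1_gt0 : 0 < 1 + e by lra.
rewrite lnM ?posrE ?exprn_gt0 ?ltr_wpDr // lnXn // lerD ?le_ln1Dx //.
  by rewrite mulr_natl lerMn2r le_ln1Dx ?orbT //; lra.
lra.
Qed.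

Lemma mul_frac_succ_le (c x : R) : 0 <= c -> 0 < x -> c * (x / (4 * (c + 1))) <= x / 4.
Proof.
move=> c_ge0 x_gt0; rewrite mulrA ler_pdivrMr; last lra.
have -> : x / 4 * (4 * (c + 1)) = x * (c + 1) by field.
nra.
Qed.

End RBMApproximation.

Theorem corollary1 (R : realType) (n : nat) (hn : (1 <= n)%N)
    (p : bvec n -> R) (hp : is_distr p) (eps : R) (heps : 0 < eps) :
  exists (W : 'M[R]_(2 ^ n %/ 2 - 1, n)) (B : 'rV[R]_n) (C : 'rV[R]_(2 ^ n %/ 2 - 1)),
    KL p (rbm_marginal W B C) < eps.
Proof.
case: n hn p hp => [//|k] _ p hp; set m := (2 ^ k.+1 %/ 2 - 1)%N.
pose N : R := #|{: bvec k.+1}|%:R.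
pose eta := eps / (4 * (N + 1)); pose e := eps / (4 * (m%:R + 1)).
have eta_gt0 : 0 < eta by rewrite divr_gt0 // mulr_gt0 // ltr_wpDl.
have e_gt0 : 0 < e by rewrite divr_gt0 // mulr_gt0 // ltr_wpDl.
(* Smoothing [p] by [eta] keeps the target positive, as an RBM marginal is. *)
pose T v := p v + eta.
have T_gt0 v : 0 < T v by rewrite ltr_wpDl ?hp.1.
pose phi v := ln (T v) - ln (T (bzero k)).
have [|W [B [C FT]]] := @rbm_vweight_approx _ k phi e _ e_gt0; first exact: subrr.
exists W, B, C; rewrite rbm_marginalE.
apply: le_lt_trans (KL_normalized_le (c := (T (bzero k))^-1) hp _ T_gt0 _ _) _.
- by move=> v; rewrite lerDl ltW.
- by rewrite invr_gt0.
- move=> v; rewrite (_ : _ * T v = expR (phi v)) ?FT //.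
  by rewrite expRB !lnK ?posrE // mulrC.
have sumT : \sum_v T v = 1 + N * eta by rewrite big_split /= hp.2 sumr_const mulr_natl.
have N_ge0 : 0 <= N by apply: ler0n.
rewrite sumT; apply: le_lt_trans
  (ln_expr1D_mul_le m (ltW e_gt0) (mulr_ge0 N_ge0 (ltW eta_gt0))) _.
have := mul_frac_succ_le (ler0n _ m) heps.
have := mul_frac_succ_le (ler0n _ #|{: bvec k.+1}|) heps.
rewrite -/N -/eta -/e -/m; lra.
Qed.
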